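(* Let $X$ be a Tychonoff space. Then for every closed discrete set $D\subset X$ we have $|D|\le\chi((C(X),\tau_\Gamma))$, where $|D|$ is the cardinality of $D$ and $\chi$ denotes the character of the space.
   Context: $C(X)$ is the set of continuous real-valued functions on $X$, each identified with its graph in $X\times\mathbb{R}$. The graph topology $\tau_\Gamma$ on $C(X)$ has base $\{F_G: G\text{ open in }X\times\mathbb{R}\}$ where $F_G=\{f\in C(X): f\subset G\}$. The character $\chi$ of a space is the supremum over its points of the minimal cardinality of a neighbourhood base at the point (an infinite cardinal). *)

From Stdlib Require Import Reals.
Open Scope R_scope.

Definition is_topology {X : Type} (T : (X -> Prop) -> Prop) : Prop :=
  T (fun _ => True) /\
  T (fun _ => False) /\
  (forall U V, T U -> T V -> T (fun x => U x /\ V x)) /\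
  (forall F : (X -> Prop) -> Prop,
      (forall U, F U -> T U) -> T (fun x => exists U, F U /\ U x)).

Definition is_closed {X : Type} (T : (X -> Prop) -> Prop) (A : X -> Prop) : Prop :=
  T (fun x => ~ A x).

Definition R_open (U : R -> Prop) : Prop :=
  forall x, U x -> exists eps, 0 < eps /\ forall y, Rabs (y - x) < eps -> U y.

Definition continuous_real {X : Type} (T : (X -> Prop) -> Prop) (f : X -> R) : Prop :=
  forall V, R_open V -> T (fun x => V (f x)).

Definition T1 {X : Type} (T : (X -> Prop) -> Prop) : Prop :=
  forall x : X, is_closed T (fun y => y = x).

Definition completely_regular {X : Type} (T : (X -> Prop) -> Prop) : Prop :=
  forall (F : X -> Prop) (x : X), is_closed T F -> ~ F x ->
    exists f : X -> R, continuous_real T f /\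
      (forall y, 0 <= f y <= 1) /\ f x = 0 /\ (forall y, F y -> f y = 1).

Definition tychonoff {X : Type} (T : (X -> Prop) -> Prop) : Prop :=
  is_topology T /\ T1 T /\ completely_regular T.

Definition closed_discrete {X : Type} (T : (X -> Prop) -> Prop) (D : X -> Prop) : Prop :=
  is_closed T D /\
  forall x, D x -> exists U, T U /\ U x /\ (forall y, U y -> D y -> y = x).

Definition prod_open {X : Type} (T : (X -> Prop) -> Prop) (G : X * R -> Prop) : Prop :=
  forall x t, G (x, t) ->
    exists U eps, T U /\ U x /\ 0 < eps /\
      forall y s, U y -> Rabs (s - t) < eps -> G (y, s).

Definition CX {X : Type} (T : (X -> Prop) -> Prop) : Type :=
  { f : X -> R | continuous_real T f }.

Definition F_G {X : Type} (T : (X -> Prop) -> Prop) (G : X * R -> Prop)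
  : CX T -> Prop :=
  fun f => forall x, G (x, proj1_sig f x).

Definition graph_open {X : Type} (T : (X -> Prop) -> Prop) (W : CX T -> Prop) : Prop :=
  forall f, W f -> exists G, prod_open T G /\ F_G T G f /\
    (forall g, F_G T G g -> W g).

Definition local_base {Y L : Type} (O : (Y -> Prop) -> Prop) (p : Y)
  (B : L -> Y -> Prop) : Prop :=
  (forall l, O (B l) /\ B l p) /\
  (forall U, O U -> U p -> exists l, forall y, B l y -> U y).

(** "chi(Y) <= |L|": |L| is infinite and every point has a local base of
    cardinality at most |L| (i.e. indexed by L). *)
Definition character_le {Y : Type} (O : (Y -> Prop) -> Prop) (L : Type) : Prop :=
  (exists e : nat -> L, forall m n, e m = e n -> m = n) /\
  (forall p : Y, exists B : L -> Y -> Prop, local_base O p B).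

From Stdlib Require Import Reals Lra Classical ClassicalEpsilon
  FunctionalExtensionality PropExtensionality ProofIrrelevance.
From mathcomp Require classical_sets.
Open Scope R_scope.

(* Fix a local base (B_l)_{l in L} at the zero function.  The heart of the
   argument is a diagonalisation showing that there is NO injection
   p : L -> D: choose f_l in B_l with f_l(p l) <> 0 (possible by complete
   regularity), and a positive g : X -> R with g(p l) = |f_l(p l)|.  Since D
   is closed discrete, W = {f | |f x| < g x for x in D} is a graph-open
   neighbourhood of 0, so some B_l is inside W; but f_l in B_l violates the
   constraint at p l.
   On the other hand any two types are comparable by injections (a maximal
   partial injection, obtained from Zorn's lemma, is total on one side).
   Hence D injects into L. *)

Lemma open_ext {X : Type} (T : (X -> Prop) -> Prop) (U V : X -> Prop) :
  T U -> (forall x, U x <-> V x) -> T V.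
Proof.
  intros HU HUV.
  replace V with U; [exact HU |].
  apply functional_extensionality; intro x.
  apply propositional_extensionality; apply HUV.
Qed.

Lemma const_continuous {X : Type} (T : (X -> Prop) -> Prop) (c : R) :
  is_topology T -> continuous_real T (fun _ => c).
Proof.
  intros [Htrue [Hfalse _]] V _.
  destruct (classic (V c)) as [Vc | nVc].
  - apply (open_ext T (fun _ => True)); [exact Htrue | tauto].
  - apply (open_ext T (fun _ => False)); [exact Hfalse | tauto].
Qed.

Lemma affine_continuous {X : Type} (T : (X -> Prop) -> Prop) (phi : X -> R)
  (c : R) :
  0 < c -> continuous_real T phi -> continuous_real T (fun x => c * (1 - phi x)).
Proof.
  intros Hc Hphi V HV.
  apply (Hphi (fun y => V (c * (1 - y)))).
  intros y Vy.
  destruct (HV _ Vy) as [eps [Heps Hball]].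
  exists (eps / c); split; [apply Rdiv_lt_0_compat; lra |].
  intros z Hz; apply Hball.
  replace (c * (1 - z) - c * (1 - y)) with (c * - (z - y)) by ring.
  rewrite Rabs_mult, Rabs_Ropp, Rabs_pos_eq by lra.
  apply Rmult_lt_compat_l with (r := c) in Hz; [| exact Hc].
  replace (c * (eps / c)) with eps in Hz by (field; lra).
  exact Hz.
Qed.

Definition zero_fun {X : Type} (T : (X -> Prop) -> Prop) (Htop : is_topology T)
  : CX T :=
  exist _ (fun _ => 0) (const_continuous T 0 Htop).

(* In a completely regular space, every graph-open neighbourhood of the zero
   function contains a function not vanishing at a prescribed point d: a
   small bump at d whose graph stays inside the basic open set. *)
Lemma graph_nbhd_zero_nonvanishing {X : Type} (T : (X -> Prop) -> Prop)
  (Htop : is_topology T) (Hcr : completely_regular T) (W : CX T -> Prop) :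
  graph_open T W -> W (zero_fun T Htop) ->
  forall d : X, exists f, W f /\ proj1_sig f d <> 0.
Proof.
  intros HW HW0 d.
  destruct (HW _ HW0) as [G [HG [HG0 HGW]]].
  destruct (HG d 0 (HG0 d)) as [U [eps [HU [Ud [Heps HUG]]]]].
  assert (Hcl : is_closed T (fun x => ~ U x)).
  { apply (open_ext T U); [exact HU | intro x; tauto]. }
  destruct (Hcr _ d Hcl) as [phi [Hphi [Hbound [Hphid Hphi1]]]]; [tauto |].
  assert (Hc : 0 < eps / 2) by lra.
  exists (exist (continuous_real T) (fun x => eps / 2 * (1 - phi x))
            (affine_continuous T phi _ Hc Hphi)).
  split; simpl.
  - apply HGW; intro x; simpl.
    destruct (classic (U x)) as [Ux | nUx].
    + specialize (Hbound x).
      apply HUG; [exact Ux |].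
      rewrite Rminus_0_r, Rabs_pos_eq by (apply Rmult_le_pos; lra).
      assert (eps / 2 * (1 - phi x) <= eps / 2 * 1)
        by (apply Rmult_le_compat_l; lra).
      lra.
    + rewrite (Hphi1 x nUx), Rminus_diag, Rmult_0_r.
      apply HG0.
  - rewrite Hphid; lra.
Qed.

(* For D closed discrete and any gauge g, the set of functions with
   |f x| < g x at every point of D is graph-open: near a point of D the
   constraint involves only that point, and off D it is void. *)
Lemma graph_open_below_gauge {X : Type} (T : (X -> Prop) -> Prop)
  (D : X -> Prop) (g : X -> R) :
  closed_discrete T D ->
  graph_open T (fun f : CX T => forall x, D x -> Rabs (proj1_sig f x) < g x).
Proof.
  intros [HDclosed HDisolated] f Hf.
  exists (fun p => D (fst p) -> Rabs (snd p) < g (fst p)).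
  split; [| split; [exact Hf | intros h Hh; exact Hh]].
  intros x t Gxt; simpl in Gxt.
  destruct (classic (D x)) as [Dx | nDx].
  - destruct (HDisolated x Dx) as [U [HU [Ux Hiso]]].
    specialize (Gxt Dx).
    exists U, (g x - Rabs t).
    split; [exact HU | split; [exact Ux | split; [lra |]]].
    intros y s Uy Hs Dy; simpl.
    rewrite (Hiso y Uy Dy).
    pose proof (Rabs_triang_inv s t); lra.
  - exists (fun y => ~ D y), 1.
    split; [exact HDclosed | split; [exact nDx | split; [lra |]]].
    intros y s nDy _ Dy; contradiction.
Qed.

Lemma positive_extension {L X : Type} (p : L -> X) (h : L -> R) :
  (forall l l', p l = p l' -> l = l') -> (forall l, 0 < h l) ->
  exists g : X -> R, (forall x, 0 < g x) /\ (forall l, g (p l) = h l).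
Proof.
  intros Hinj Hpos.
  assert (Hval : forall x, exists r, 0 < r /\ forall l, p l = x -> r = h l).
  { intro x.
    destruct (classic (exists l, p l = x)) as [[l Hl] | Hnone].
    - exists (h l); split; [apply Hpos |].
      intros l' Hl'; f_equal; apply Hinj; congruence.
    - exists 1; split; [lra |].
      intros l Hl; exfalso; apply Hnone; exists l; exact Hl. }
  destruct (choice _ Hval) as [g Hg].
  exists g; split.
  - intro x; apply (Hg x).
  - intro l; apply (Hg (p l)); reflexivity.
Qed.

Lemma no_injection_into_closed_discrete {X L : Type}
  (T : (X -> Prop) -> Prop) (Htop : is_topology T) (Hcr : completely_regular T)
  (D : X -> Prop) (B : L -> CX T -> Prop) :
  closed_discrete T D -> local_base (graph_open T) (zero_fun T Htop) B ->
  forall p : L -> {x : X | D x}, (forall l l', p l = p l' -> l = l') -> False.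
Proof.
  intros HD [Hopen Hcover] p Hinj.
  pose (q l := proj1_sig (p l)).
  assert (Hq_inj : forall l l', q l = q l' -> l = l').
  { intros l l' Hll'; apply Hinj.
    unfold q in Hll'; destruct (p l) as [x Dx], (p l') as [x' Dx'].
    simpl in Hll'; subst x'; f_equal; apply proof_irrelevance. }
  assert (Hbump : forall l, exists f, B l f /\ proj1_sig f (q l) <> 0).
  { intro l; destruct (Hopen l) as [HBl HBl0].
    exact (graph_nbhd_zero_nonvanishing T Htop Hcr (B l) HBl HBl0 (q l)). }
  destruct (choice _ Hbump) as [f Hf].
  destruct (positive_extension q (fun l => Rabs (proj1_sig (f l) (q l))) Hq_inj)
    as [g [Hgpos Hgq]].
  { intro l; apply Rabs_pos_lt, (Hf l). }
  destruct (Hcover _ (graph_open_below_gauge T D g HD)) as [l HBlW].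
  { intros x _; simpl; rewrite Rabs_R0; apply Hgpos. }
  assert (Hlt := HBlW _ (proj1 (Hf l)) (q l) (proj2_sig (p l))).
  rewrite Hgq in Hlt; lra.
Qed.

Definition partial_injection {A B : Type} (M : (A * B)%type -> Prop) : Prop :=
  (forall a b b', M (a, b) -> M (a, b') -> b = b') /\
  (forall a a' b, M (a, b) -> M (a', b) -> a = a').

Lemma maximal_partial_injection (A B : Type) : exists M : (A * B)%type -> Prop,
  partial_injection M /\
  forall a b, (forall b', ~ M (a, b')) -> (forall a', ~ M (a', b)) -> False.
Proof.
  destruct (@classical_sets.Zorn_bigcup (A * B)%type partial_injection)
    as [M [[Mfun Minj] Mmax]].
  - intros F HF Htot; split.
    + intros a b b' [N FN Nab] [N' FN' Nab'].
      destruct (Htot _ _ FN FN') as [NN' | N'N].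
      * exact (proj1 (HF _ FN') _ _ _ (NN' _ Nab) Nab').
      * exact (proj1 (HF _ FN) _ _ _ Nab (N'N _ Nab')).
    + intros a a' b [N FN Nab] [N' FN' Na'b].
      destruct (Htot _ _ FN FN') as [NN' | N'N].
      * exact (proj2 (HF _ FN') _ _ _ (NN' _ Nab) Na'b).
      * exact (proj2 (HF _ FN) _ _ _ Nab (N'N _ Na'b)).
  - exists M; split; [split; assumption |].
    intros a b Hna Hnb.
    apply (Mmax (fun q => M q \/ q = (a, b))).
    + split; [intros q Mq; left; exact Mq |].
      intro Hsub; apply (Hna b), Hsub; right; reflexivity.
    + split.
      * intros x y y' [Mxy | Exy] [Mxy' | Exy'].
        -- exact (Mfun _ _ _ Mxy Mxy').
        -- injection Exy'; intros; subst; exfalso; exact (Hna _ Mxy).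
        -- injection Exy; intros; subst; exfalso; exact (Hna _ Mxy').
        -- congruence.
      * intros x x' y [Mxy | Exy] [Mx'y | Ex'y].
        -- exact (Minj _ _ _ Mxy Mx'y).
        -- injection Ex'y; intros; subst; exfalso; exact (Hnb _ Mxy).
        -- injection Exy; intros; subst; exfalso; exact (Hnb _ Mx'y).
        -- congruence.
Qed.

Lemma injection_comparable (A B : Type) :
  (exists f : A -> B, forall a a', f a = f a' -> a = a') \/
  (exists g : B -> A, forall b b', g b = g b' -> b = b').
Proof.
  destruct (maximal_partial_injection A B) as [M [[Mfun Minj] Mmax]].
  destruct (classic (forall a, exists b, M (a, b))) as [Htotal | Hpartial].
  - left; destruct (choice _ Htotal) as [f Hf]; exists f.
    intros a a' Haa'; apply (Minj a a' (f a)); [apply Hf | rewrite Haa'; apply Hf].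
  - right.
    destruct (not_all_ex_not _ _ Hpartial) as [a Ha].
    assert (Hsurj : forall b, exists a', M (a', b)).
    { intro b; apply NNPP; intro Hb.
      apply (Mmax a b).
      - intros b' Mab'; apply Ha; exists b'; exact Mab'.
      - intros a' Ma'b; apply Hb; exists a'; exact Ma'b. }
    destruct (choice _ Hsurj) as [g Hg]; exists g.
    intros b b' Hbb'; apply (Mfun (g b)); [apply Hg | rewrite Hbb'; apply Hg].
Qed.

Theorem theorem3p1 :
  forall (X : Type) (T : (X -> Prop) -> Prop),
    tychonoff T ->
    forall D : X -> Prop, closed_discrete T D ->
    forall L : Type, character_le (graph_open T) L ->
      exists h : {x : X | D x} -> L, forall a b, h a = h b -> a = b.
Proof.
  intros X T [Htop [_ Hcr]] D HD L [_ Hbases].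
  destruct (Hbases (zero_fun T Htop)) as [B HB].
  destruct (injection_comparable {x : X | D x} L) as [HDL | [p Hp]].
  - exact HDL.
  - exfalso; exact (no_injection_into_closed_discrete T Htop Hcr D B HD HB p Hp).
Qed.
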